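(* Let $\alpha>0$ and let $u$ be a sufficiently smooth solution of the $\alpha$--Euler equations with Dirichlet boundary condition on $\Omega$. Set $v=u-\alpha\Delta u$. Then for every $i\in\{1,\dots,N\}$ the circulation $\int_{\Gamma_i}v\cdot n^\perp$ of $v$ on $\Gamma_i$ is constant in time.
   Context: $\Omega\subset\mathbb R^2$ is a smooth bounded domain with $\partial\Omega=\Gamma\cup\Gamma_1\cup\dots\cup\Gamma_N$, where $\Gamma$ is the outer boundary component and $\Gamma_1,\dots,\Gamma_N$ are the inner components (smooth closed curves). $n$ is the outward unit normal and $n^\perp$ the unit tangent vector. The $\alpha$--Euler equations with Dirichlet boundary condition are $\partial_t(u-\alpha\Delta u)+u\cdot\nabla(u-\alpha\Delta u)+\sum_j(u-\alpha\Delta u)_j\nabla u_j=-\nabla\pi$, $\operatorname{div}u=0$ in $\Omega$, $u|_{\partial\Omega}=0$. *)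

From Stdlib Require Import Reals Lra List ClassicalEpsilon.
Open Scope R_scope.

(* Derivative of a one-variable function (the true derivative when it exists). *)
Definition derive (g : R -> R) (a : R) : R :=
  epsilon (inhabits 0) (fun l => derivable_pt_lim g a l).

Fixpoint dern (n : nat) (g : R -> R) : R -> R :=
  match n with O => g | S m => derive (dern m g) end.

Definition smooth1 (g : R -> R) : Prop :=
  forall n, forall a, exists l, derivable_pt_lim (dern n g) a l.

(* Riemann integral over [a,b] (the value when integrable). *)
Definition Rint (f : R -> R) (a b : R) : R :=
  epsilon (inhabits 0) (fun I => exists pr : Riemann_integrable f a b, RiemannInt pr = I).

(* Space-time scalar fields: f t x y, with (x,y) in R^2. *)
Definition field := R -> R -> R -> R.

(* partial derivatives: index 0 = time, 1 = x, 2 = y *)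
Definition pd (i : nat) (f : field) : field :=
  fun t x y => match i with
  | O => derive (fun s => f s x y) t
  | 1%nat => derive (fun s => f t s y) x
  | _ => derive (fun s => f t x s) y
  end.

Fixpoint pds (l : list nat) (f : field) : field :=
  match l with nil => f | i :: l' => pd i (pds l' f) end.

Definition continuous3 (f : field) : Prop :=
  forall t x y eps, eps > 0 -> exists delta, delta > 0 /\
    forall t' x' y', Rabs (t' - t) < delta -> Rabs (x' - x) < delta ->
      Rabs (y' - y) < delta -> Rabs (f t' x' y' - f t x y) < eps.

Definition smooth3 (f : field) : Prop :=
  forall l, continuous3 (pds l f) /\
   forall t x y,
     (exists a, derivable_pt_lim (fun s => pds l f s x y) t a) /\
     (exists a, derivable_pt_lim (fun s => pds l f t s y) x a) /\
     (exists a, derivable_pt_lim (fun s => pds l f t x s) y a).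

Definition lap (f : field) : field :=
  fun t x y => pds (1%nat :: 1%nat :: nil) f t x y + pds (2%nat :: 2%nat :: nil) f t x y.

Definition open2 (O : R -> R -> Prop) : Prop :=
  forall x y, O x y -> exists r, r > 0 /\
    forall x' y', (x' - x) ^ 2 + (y' - y) ^ 2 < r ^ 2 -> O x' y'.

Definition bounded2 (O : R -> R -> Prop) : Prop :=
  exists M, forall x y, O x y -> x ^ 2 + y ^ 2 <= M.

Definition path_connected2 (O : R -> R -> Prop) : Prop :=
  (exists x y, O x y) /\
  forall a1 a2 b1 b2, O a1 a2 -> O b1 b2 ->
    exists p1 p2 : R -> R, continuity p1 /\ continuity p2 /\
      p1 0 = a1 /\ p2 0 = a2 /\ p1 1 = b1 /\ p2 1 = b2 /\
      forall s, 0 <= s <= 1 -> O (p1 s) (p2 s).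

Definition closure2 (O : R -> R -> Prop) (x y : R) : Prop :=
  forall r, r > 0 -> exists x' y', O x' y' /\ (x' - x) ^ 2 + (y' - y) ^ 2 < r ^ 2.

Definition boundary2 (O : R -> R -> Prop) (x y : R) : Prop :=
  closure2 O x y /\ ~ O x y.

Definition closed_curve (c1 c2 : R -> R) (L : R) : Prop :=
  L > 0 /\ smooth1 c1 /\ smooth1 c2 /\
  (forall s, c1 (s + L) = c1 s /\ c2 (s + L) = c2 s) /\
  (forall s s', 0 <= s < L -> 0 <= s' < L -> c1 s = c1 s' -> c2 s = c2 s' -> s = s') /\
  (forall s, derive c1 s <> 0 \/ derive c2 s <> 0).

(* Smooth bounded domain Omega whose boundary is the disjoint union of the
   N+1 curves Gamma_i = image of (c1 i, c2 i), i = 0..N; Gamma_0 = Gamma is the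
   outer component.  epsn i in {1,-1} fixes the outward normal:
   n = epsn i * (c2', -c1')/|c'|  (Omega lies locally on the side of -n),
   and the unit tangent n^perp = (-n_2, n_1) = epsn i * c'/|c'|. *)
Definition smooth_domain (Om : R -> R -> Prop) (N : nat)
    (c1 c2 : nat -> R -> R) (L epsn : nat -> R) : Prop :=
  open2 Om /\ bounded2 Om /\ path_connected2 Om /\
  (forall i, (i <= N)%nat -> closed_curve (c1 i) (c2 i) (L i)) /\
  (forall x y, boundary2 Om x y <->
      exists i s, (i <= N)%nat /\ c1 i s = x /\ c2 i s = y) /\
  (forall i j s s', (i <= N)%nat -> (j <= N)%nat -> i <> j ->
      ~ (c1 i s = c1 j s' /\ c2 i s = c2 j s')) /\
  (forall i, (i <= N)%nat -> (epsn i = 1 \/ epsn i = -1) /\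
     forall s, exists delta, delta > 0 /\ forall h, 0 < h < delta ->
       let n1 := epsn i * derive (c2 i) s in
       let n2 := - epsn i * derive (c1 i) s in
       ~ Om (c1 i s + h * n1) (c2 i s + h * n2) /\
       Om (c1 i s - h * n1) (c2 i s - h * n2)) /\
  (* Gamma_0 is the outer component: each of its points can be joined to
     infinity by a path avoiding the closure of Omega *)
  (forall s, exists p1 p2 : R -> R, continuity p1 /\ continuity p2 /\
      p1 0 = c1 O s /\ p2 0 = c2 O s /\
      (forall tau, 0 < tau -> ~ closure2 Om (p1 tau) (p2 tau)) /\
      (forall M, exists tau, 0 < tau /\ (p1 tau) ^ 2 + (p2 tau) ^ 2 > M)).

(* Circulation of (v1,v2) at time t on Gamma_i:  int_{Gamma_i} v . n^perp ds *)
Definition circulation (v1 v2 : field) (c1 c2 : nat -> R -> R) (L epsn : nat -> R)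
    (i : nat) (t : R) : R :=
  epsn i * Rint (fun s => v1 t (c1 i s) (c2 i s) * derive (c1 i) s
                        + v2 t (c1 i s) (c2 i s) * derive (c2 i) s) 0 (L i).

Definition alpha_euler_dirichlet (alpha T : R) (Om : R -> R -> Prop) (N : nat)
    (c1 c2 : nat -> R -> R) (u1 u2 p : field) : Prop :=
  let v1 : field := fun t x y => u1 t x y - alpha * lap u1 t x y in
  let v2 : field := fun t x y => u2 t x y - alpha * lap u2 t x y in
  (forall t x y, 0 <= t < T -> Om x y ->
     pd 0 v1 t x y + u1 t x y * pd 1 v1 t x y + u2 t x y * pd 2 v1 t x y
       + (v1 t x y * pd 1 u1 t x y + v2 t x y * pd 1 u2 t x y) = - pd 1 p t x y /\
     pd 0 v2 t x y + u1 t x y * pd 1 v2 t x y + u2 t x y * pd 2 v2 t x y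
       + (v1 t x y * pd 2 u1 t x y + v2 t x y * pd 2 u2 t x y) = - pd 2 p t x y /\
     pd 1 u1 t x y + pd 2 u2 t x y = 0) /\
  (forall t i s, 0 <= t < T -> (i <= N)%nat ->
     u1 t (c1 i s) (c2 i s) = 0 /\ u2 t (c1 i s) (c2 i s) = 0).

(* On Γ_i the Dirichlet condition kills u, so the convective term u·∇v vanishes there
   and the equation reduces to ∂_t v = -∇π - Σ_j v_j ∇u_j.  Since u_j ≡ 0 along Γ_i, its
   tangential derivative vanishes, so ∇u_j is normal to Γ_i and only the pressure
   survives in the tangential component: ∂_t v · c' = -(π ∘ c)'.  The integral of this
   exact derivative over a period of c is zero, and differentiating the circulation
   under the integral sign shows that its time derivative vanishes. *)

From Stdlib Require Import Reals Lra List ClassicalEpsilon FunctionalExtensionality.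
From Coquelicot Require Import Coquelicot.
Open Scope R_scope.

Lemma derive_unique g a l : derivable_pt_lim g a l -> derive g a = l.
Proof.
  intros Hl. apply (uniqueness_limite g a); [|exact Hl].
  exact (epsilon_spec (inhabits 0) _ (ex_intro _ l Hl)).
Qed.

Lemma derivable_pt_lim_derive g a :
  (exists l, derivable_pt_lim g a l) -> derivable_pt_lim g a (derive g a).
Proof. intros [l Hl]. rewrite (derive_unique _ _ _ Hl). exact Hl. Qed.

Lemma smooth1_derivable a s : smooth1 a -> derivable_pt_lim a s (derive a s).
Proof. intros Ha. apply derivable_pt_lim_derive, (Ha 0%nat). Qed.

Lemma smooth1_continuity a s : smooth1 a -> continuity_pt a s.
Proof. intros Ha. apply derivable_continuous_pt. exists (derive a s). now apply smooth1_derivable. Qed.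

Lemma smooth1_continuity_derive a s : smooth1 a -> continuity_pt (derive a) s.
Proof. intros Ha. destruct (Ha 1%nat s) as [l Hl]. exact (derivable_continuous_pt _ _ (exist _ l Hl)). Qed.

Definition slice (i : nat) (F : field) (t x y : R) : R -> R :=
  match i with O => fun s => F s x y | 1%nat => fun s => F t s y | _ => fun s => F t x s end.

Definition coord (i : nat) (t x y : R) : R :=
  match i with O => t | 1%nat => x | _ => y end.

Lemma pd_slice i F t x y : pd i F t x y = derive (slice i F t x y) (coord i t x y).
Proof. now destruct i as [|[|i]]. Qed.

Lemma smooth3_derivable i F t x y :
  smooth3 F -> derivable_pt_lim (slice i F t x y) (coord i t x y) (pd i F t x y).
Proof.
  intros HF. rewrite pd_slice. apply derivable_pt_lim_derive.
  destruct (HF nil) as [_ HD]. destruct (HD t x y) as [Ht [Hx Hy]].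
  now destruct i as [|[|i]].
Qed.

Lemma pds_app l m F : pds l (pds m F) = pds (l ++ m) F.
Proof. induction l as [|i l IH]; simpl; [reflexivity|now rewrite IH]. Qed.

Lemma smooth3_pds m F : smooth3 F -> smooth3 (pds m F).
Proof. intros HF l. rewrite pds_app. apply HF. Qed.

Lemma smooth3_pd i F : smooth3 F -> smooth3 (pd i F).
Proof. exact (smooth3_pds (i :: nil) F). Qed.

Definition lincomb (c d : R) (F G : field) : field :=
  fun t x y => c * F t x y + d * G t x y.

Lemma slice_lincomb i c d F G t x y :
  slice i (lincomb c d F G) t x y = fun s => c * slice i F t x y s + d * slice i G t x y s.
Proof. now destruct i as [|[|i]]. Qed.

Lemma pd_lincomb i c d F G : smooth3 F -> smooth3 G ->
  pd i (lincomb c d F G) = lincomb c d (pd i F) (pd i G).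
Proof.
  intros HF HG. do 3 (apply functional_extensionality; intro).
  rewrite pd_slice, slice_lincomb. apply derive_unique.
  apply derivable_pt_lim_plus; apply derivable_pt_lim_scal; now apply smooth3_derivable.
Qed.

Lemma pds_lincomb l c d F G : smooth3 F -> smooth3 G ->
  pds l (lincomb c d F G) = lincomb c d (pds l F) (pds l G).
Proof.
  intros HF HG. induction l as [|i l IH]; [reflexivity|].
  simpl. rewrite IH. apply pd_lincomb; now apply smooth3_pds.
Qed.

Lemma continuous3_lincomb c d F G :
  continuous3 F -> continuous3 G -> continuous3 (lincomb c d F G).
Proof.
  intros HF HG t x y eps Heps.
  set (K := Rabs c + Rabs d + 1).
  assert (HK : 0 < K) by (unfold K; pose proof (Rabs_pos c); pose proof (Rabs_pos d); lra).
  assert (He : eps / K > 0) by (apply Rdiv_lt_0_compat; lra).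
  destruct (HF t x y _ He) as [d1 [Hd1 H1]]. destruct (HG t x y _ He) as [d2 [Hd2 H2]].
  exists (Rmin d1 d2). split; [now apply Rmin_pos|].
  intros t' x' y' Ht Hx Hy.
  assert (EF := H1 t' x' y' (Rlt_le_trans _ _ _ Ht (Rmin_l _ _))
                  (Rlt_le_trans _ _ _ Hx (Rmin_l _ _)) (Rlt_le_trans _ _ _ Hy (Rmin_l _ _))).
  assert (EG := H2 t' x' y' (Rlt_le_trans _ _ _ Ht (Rmin_r _ _))
                  (Rlt_le_trans _ _ _ Hx (Rmin_r _ _)) (Rlt_le_trans _ _ _ Hy (Rmin_r _ _))).
  unfold lincomb.
  replace (c * F t' x' y' + d * G t' x' y' - (c * F t x y + d * G t x y))
    with (c * (F t' x' y' - F t x y) + d * (G t' x' y' - G t x y)) by ring.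
  eapply Rle_lt_trans; [apply Rabs_triang|]. rewrite !Rabs_mult.
  assert (Hc := Rabs_pos c). assert (Hd := Rabs_pos d).
  assert (eps = K * (eps / K)) by (field; lra).
  unfold K in *. nra.
Qed.

Lemma smooth3_lincomb c d F G : smooth3 F -> smooth3 G -> smooth3 (lincomb c d F G).
Proof.
  intros HF HG l. rewrite pds_lincomb by assumption.
  split; [apply continuous3_lincomb; [apply HF|apply HG]|].
  intros t x y.
  assert (HD : forall i, exists l', derivable_pt_lim
             (slice i (lincomb c d (pds l F) (pds l G)) t x y) (coord i t x y) l').
  { intros i. rewrite slice_lincomb. eexists.
    apply derivable_pt_lim_plus; apply derivable_pt_lim_scal;
      apply smooth3_derivable; now apply smooth3_pds. }
  exact (conj (HD 0%nat) (conj (HD 1%nat) (HD 2%nat))).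
Qed.

Lemma smooth3_helmholtz c F : smooth3 F -> smooth3 (fun t x y => F t x y - c * lap F t x y).
Proof.
  intros HF.
  replace (fun t x y => F t x y - c * lap F t x y)
    with (lincomb 1 (- c) F (lincomb 1 1 (pds (1 :: 1 :: nil)%nat F) (pds (2 :: 2 :: nil)%nat F))).
  - apply smooth3_lincomb; [assumption|].
    apply smooth3_lincomb; now apply smooth3_pds.
  - do 3 (apply functional_extensionality; intro). unfold lincomb, lap. ring.
Qed.

Lemma continuous3_continuity_2d_pt F t x y : continuous3 F -> continuity_2d_pt (F t) x y.
Proof.
  intros HF eps. destruct (HF t x y eps (cond_pos eps)) as [d [Hd H]].
  exists (mkposreal d Hd). intros u v Hu Hv. apply H; simpl; auto.
  rewrite Rminus_diag, Rabs_R0. exact Hd.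
Qed.

Lemma smooth3_continuity_2d_pt F t x y : smooth3 F -> continuity_2d_pt (F t) x y.
Proof. intros HF. exact (continuous3_continuity_2d_pt _ t x y (proj1 (HF nil))). Qed.

Lemma continuity_pt_ball f s d :
  continuity_pt f s -> d > 0 -> exists e', e' > 0 /\
    forall r, Rabs (r - s) < e' -> Rabs (f r - f s) < d.
Proof.
  intros Hf Hd. destruct (Hf d Hd) as [e' [He' H]]. exists e'. split; [exact He'|].
  intros r Hr. destruct (Req_dec r s) as [->|Hne].
  - now rewrite Rminus_diag, Rabs_R0.
  - apply H. split; [split; [exact I|auto]|exact Hr].
Qed.

Lemma continuous3_continuity_2d_pt_curve F a b t s :
  continuous3 F -> continuity_pt a s -> continuity_pt b s ->
  continuity_2d_pt (fun u r => F u (a r) (b r)) t s.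
Proof.
  intros HF Ha Hb eps. destruct (HF t (a s) (b s) eps (cond_pos eps)) as [d [Hd H]].
  destruct (continuity_pt_ball a s d Ha Hd) as [da [Hda HA]].
  destruct (continuity_pt_ball b s d Hb Hd) as [db [Hdb HB]].
  assert (Hm : 0 < Rmin d (Rmin da db)) by (repeat apply Rmin_pos; auto).
  exists (mkposreal _ Hm). simpl. intros u r Hu Hr.
  assert (Hr' := Rlt_le_trans _ _ _ Hr (Rmin_r _ _)).
  apply H.
  - exact (Rlt_le_trans _ _ _ Hu (Rmin_l _ _)).
  - apply HA. exact (Rlt_le_trans _ _ _ Hr' (Rmin_l _ _)).
  - apply HB. exact (Rlt_le_trans _ _ _ Hr' (Rmin_r _ _)).
Qed.

Lemma continuity_2d_pt_continuity_pt_snd g x y :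
  continuity_2d_pt g x y -> continuity_pt (g x) y.
Proof.
  intros H eps He. destruct (H (mkposreal eps He)) as [d Hd].
  exists d. split; [apply cond_pos|]. intros z [_ Hz]. simpl in *. unfold R_dist in *.
  apply Hd; [|exact Hz]. rewrite Rminus_diag, Rabs_R0. apply cond_pos.
Qed.

Lemma MVT_abs f f' p q : (forall c, derivable_pt_lim f c (f' c)) ->
  exists c, f q - f p = f' c * (q - p) /\ Rabs (c - p) <= Rabs (q - p).
Proof.
  intros H. destruct (Rtotal_order p q) as [Hl|[<-|Hg]].
  - destruct (MVT_cor2 f f' p q Hl (fun c _ => H c)) as [c [E Hc]].
    exists c. split; [exact E|]. rewrite !Rabs_right by lra. lra.
  - exists p. rewrite !Rminus_diag. split; [ring|lra].
  - destruct (MVT_cor2 f f' q p Hg (fun c _ => H c)) as [c [E Hc]].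
    exists c. split; [lra|]. rewrite !Rabs_left1 by lra. lra.
Qed.

Lemma differentiable_pt_lim_partials (g gx : R -> R -> R) gy x0 y0 :
  (forall x y, derivable_pt_lim (fun z => g z y) x (gx x y)) ->
  derivable_pt_lim (fun z => g x0 z) y0 gy ->
  continuity_2d_pt gx x0 y0 ->
  differentiable_pt_lim g x0 y0 (gx x0 y0) gy.
Proof.
  intros Hx Hy Hc eps.
  assert (He2 : 0 < eps / 2) by (destruct eps; simpl; lra).
  destruct (Hc (mkposreal _ He2)) as [d1 Hd1].
  destruct (Hy _ He2) as [d2 Hd2].
  assert (Hm : 0 < Rmin d1 d2) by (apply Rmin_pos; apply cond_pos).
  exists (mkposreal _ Hm). simpl. intros u v Hu Hv.
  assert (Hu1 := Rlt_le_trans _ _ _ Hu (Rmin_l _ _)).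
  assert (Hv1 := Rlt_le_trans _ _ _ Hv (Rmin_l _ _)).
  assert (Hv2 := Rlt_le_trans _ _ _ Hv (Rmin_r _ _)).
  destruct (MVT_abs (fun z => g z v) (fun z => gx z v) x0 u (fun c => Hx c v)) as [c [Ec Hcb]].
  assert (HA : Rabs (gx c v - gx x0 y0) < eps / 2) by (apply Hd1; lra).
  assert (HB : Rabs (g x0 v - g x0 y0 - gy * (v - y0)) <= eps / 2 * Rabs (v - y0)).
  { destruct (Req_dec v y0) as [->|Hne].
    - rewrite !Rminus_diag, Rmult_0_r, Rminus_0_r, Rabs_R0. lra.
    - specialize (Hd2 (v - y0) ltac:(lra) Hv2). replace (y0 + (v - y0)) with v in Hd2 by ring.
      replace (g x0 v - g x0 y0 - gy * (v - y0))
        with (((g x0 v - g x0 y0) / (v - y0) - gy) * (v - y0)) by (field; lra).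
      rewrite Rabs_mult. apply Rmult_le_compat_r; [apply Rabs_pos|lra]. }
  replace (g u v - g x0 y0 - (gx x0 y0 * (u - x0) + gy * (v - y0)))
    with ((gx c v - gx x0 y0) * (u - x0) + (g x0 v - g x0 y0 - gy * (v - y0))) by (simpl in Ec; lra).
  eapply Rle_trans; [apply Rabs_triang|]. rewrite Rabs_mult.
  assert (M1 := Rmax_l (Rabs (u - x0)) (Rabs (v - y0))).
  assert (M2 := Rmax_r (Rabs (u - x0)) (Rabs (v - y0))).
  assert (P1 := Rabs_pos (u - x0)). assert (P2 := Rabs_pos (v - y0)).
  destruct eps as [e ep]; simpl in *. nra.
Qed.

(* [(F, G) · c'] along [c = (a, b)]: not normalised, so that its integral over a period
   is the line integral. *)
Definition tangential_density (F G : field) (a b : R -> R) (t s : R) : R :=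
  F t (a s) (b s) * derive a s + G t (a s) (b s) * derive b s.

Lemma derivable_pt_lim_along_curve F a b t s : smooth3 F -> smooth1 a -> smooth1 b ->
  derivable_pt_lim (fun r => F t (a r) (b r)) s (tangential_density (pd 1 F) (pd 2 F) a b t s).
Proof.
  intros HF Ha Hb. apply derivable_pt_lim_comp_2d; try now apply smooth1_derivable.
  apply differentiable_pt_lim_partials.
  - intros x y. exact (smooth3_derivable 1 F t x y HF).
  - exact (smooth3_derivable 2 F t (a s) (b s) HF).
  - apply smooth3_continuity_2d_pt, smooth3_pd, HF.
Qed.

Lemma derivable_pt_lim_tangential_density_t F G a b t s : smooth3 F -> smooth3 G ->
  derivable_pt_lim (fun u => tangential_density F G a b u s) t
    (tangential_density (pd 0 F) (pd 0 G) a b t s).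
Proof.
  intros HF HG. apply derivable_pt_lim_plus; apply derivable_pt_lim_scal_right.
  - exact (smooth3_derivable 0 F t (a s) (b s) HF).
  - exact (smooth3_derivable 0 G t (a s) (b s) HG).
Qed.

Lemma continuity_2d_pt_tangential_density F G a b t s :
  smooth3 F -> smooth3 G -> smooth1 a -> smooth1 b ->
  continuity_2d_pt (tangential_density F G a b) t s.
Proof.
  intros HF HG Ha Hb.
  assert (Hda : forall c, smooth1 c -> continuity_2d_pt (fun _ r => derive c r) t s).
  { intros c Hc. apply (continuity_1d_2d_pt_comp (derive c) (fun _ r => r)).
    - now apply smooth1_continuity_derive.
    - apply continuity_2d_pt_id2. }
  apply continuity_2d_pt_plus; apply continuity_2d_pt_mult; auto;
    apply continuous3_continuity_2d_pt_curve; try now apply smooth1_continuity.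
  - apply (HF nil).
  - apply (HG nil).
Qed.

Lemma closure2_continuous_eq0 (Om : R -> R -> Prop) E X Y :
  continuity_2d_pt E X Y -> closure2 Om X Y ->
  (forall x y, Om x y -> E x y = 0) -> E X Y = 0.
Proof.
  intros Hc Hcl HE. destruct (Req_dec (E X Y) 0) as [H|H]; [exact H|exfalso].
  assert (Hp : 0 < Rabs (E X Y)) by now apply Rabs_pos_lt.
  destruct (Hc (mkposreal _ Hp)) as [d Hd].
  destruct (Hcl d (cond_pos d)) as [x [y [Hxy Hr]]].
  assert (Hsq : forall z w, z ^ 2 + w ^ 2 < d ^ 2 -> Rabs z < d).
  { intros z w Hzw. rewrite <- (Rabs_pos_eq d) by (left; apply cond_pos).
    apply Rsqr_lt_abs_0. unfold Rsqr. nra. }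
  specialize (Hd x y (Hsq _ _ Hr) (Hsq (y - Y) (x - X) ltac:(lra))). simpl in Hd.
  rewrite (HE x y Hxy), Rminus_0_l, Rabs_Ropp in Hd. lra.
Qed.

(* The [k]-th momentum equation as [residual = 0]; [w] is the [k]-th component of [v]. *)
Definition momentum_residual (k : nat) (w v1 v2 u1 u2 p : field) : field :=
  fun t x y => pd 0 w t x y + u1 t x y * pd 1 w t x y + u2 t x y * pd 2 w t x y
    + (v1 t x y * pd k u1 t x y + v2 t x y * pd k u2 t x y) + pd k p t x y.

Lemma momentum_residual_closure Om k w v1 v2 u1 u2 p t X Y :
  smooth3 w -> smooth3 v1 -> smooth3 v2 -> smooth3 u1 -> smooth3 u2 -> smooth3 p ->
  closure2 Om X Y ->
  (forall x y, Om x y ->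
     pd 0 w t x y + u1 t x y * pd 1 w t x y + u2 t x y * pd 2 w t x y
       + (v1 t x y * pd k u1 t x y + v2 t x y * pd k u2 t x y) = - pd k p t x y) ->
  momentum_residual k w v1 v2 u1 u2 p t X Y = 0.
Proof.
  intros Hw Hv1 Hv2 Hu1 Hu2 Hp Hcl Heq.
  apply (closure2_continuous_eq0 Om); [|exact Hcl|].
  - unfold momentum_residual.
    repeat first [ apply continuity_2d_pt_plus | apply continuity_2d_pt_mult
                 | apply smooth3_continuity_2d_pt; auto; apply smooth3_pd; auto ].
  - intros x y Hxy. unfold momentum_residual. rewrite (Heq x y Hxy). ring.
Qed.

Lemma tangential_derivative_vanishing_field u a b t s :
  smooth3 u -> smooth1 a -> smooth1 b -> (forall r, u t (a r) (b r) = 0) ->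
  tangential_density (pd 1 u) (pd 2 u) a b t s = 0.
Proof.
  intros Hu Ha Hb Zu. apply (uniqueness_limite (fun r => u t (a r) (b r)) s).
  - now apply derivable_pt_lim_along_curve.
  - replace (fun r => u t (a r) (b r)) with (fun _ : R => 0)
      by (apply functional_extensionality; intro r; now rewrite Zu).
    apply derivable_pt_lim_const.
Qed.

(* On a curve where [u] vanishes, the convective term drops out and [v_j ∇u_j] is
   normal to the curve, so only the pressure gradient contributes tangentially. *)
Lemma tangential_time_derivative_on_curve v1 v2 u1 u2 p a b t s :
  smooth3 u1 -> smooth3 u2 -> smooth1 a -> smooth1 b ->
  (forall r, u1 t (a r) (b r) = 0) -> (forall r, u2 t (a r) (b r) = 0) ->
  momentum_residual 1 v1 v1 v2 u1 u2 p t (a s) (b s) = 0 ->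
  momentum_residual 2 v2 v1 v2 u1 u2 p t (a s) (b s) = 0 ->
  tangential_density (pd 0 v1) (pd 0 v2) a b t s
    = - tangential_density (pd 1 p) (pd 2 p) a b t s.
Proof.
  intros Hu1 Hu2 Ha Hb Z1 Z2 R1 R2.
  assert (T1 := tangential_derivative_vanishing_field u1 a b t s Hu1 Ha Hb Z1).
  assert (T2 := tangential_derivative_vanishing_field u2 a b t s Hu2 Ha Hb Z2).
  unfold momentum_residual in R1, R2. unfold tangential_density in *.
  rewrite Z1, Z2 in R1, R2.
  set (X := a s) in *. set (Y := b s) in *. set (A := derive a s) in *. set (B := derive b s) in *.
  replace (pd 0 v1 t X Y)
    with (- pd 1 p t X Y - v1 t X Y * pd 1 u1 t X Y - v2 t X Y * pd 1 u2 t X Y) by lra.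
  replace (pd 0 v2 t X Y)
    with (- pd 2 p t X Y - v1 t X Y * pd 2 u1 t X Y - v2 t X Y * pd 2 u2 t X Y) by lra.
  transitivity (- (pd 1 p t X Y * A + pd 2 p t X Y * B)
    - v1 t X Y * (pd 1 u1 t X Y * A + pd 2 u1 t X Y * B)
    - v2 t X Y * (pd 1 u2 t X Y * A + pd 2 u2 t X Y * B)).
  - ring.
  - rewrite T1, T2. ring.
Qed.

Lemma Rint_RInt f a b : ex_RInt f a b -> Rint f a b = RInt f a b.
Proof.
  intros H. unfold Rint. set (pr := ex_RInt_Reals_0 _ _ _ H).
  assert (E : exists I, exists pr' : Riemann_integrable f a b, RiemannInt pr' = I)
    by (exists (RiemannInt pr); now exists pr).
  destruct (epsilon_spec (inhabits 0) _ E) as [pr' <-].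
  symmetry. apply RInt_Reals.
Qed.

Lemma ex_RInt_continuity_2d_pt (G : R -> R -> R) u a b :
  (forall s, continuity_2d_pt G u s) -> ex_RInt (G u) a b.
Proof.
  intros HG. apply (@ex_RInt_continuous R_CompleteNormedModule). intros s _.
  apply continuity_pt_filterlim, continuity_2d_pt_continuity_pt_snd, HG.
Qed.

Lemma derivable_pt_lim_RInt_param (G DG : R -> R -> R) a b u :
  (forall x s, derivable_pt_lim (fun z => G z s) x (DG x s)) ->
  (forall x s, continuity_2d_pt G x s) ->
  (forall x s, continuity_2d_pt DG x s) ->
  derivable_pt_lim (fun x => RInt (G x) a b) u (RInt (DG u) a b).
Proof.
  intros HD HG HDG.
  assert (HDer : forall x s, Derive (fun z => G z s) x = DG x s).
  { intros x s. apply is_derive_unique, is_derive_Reals, HD. }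
  apply is_derive_Reals.
  rewrite (RInt_ext _ (fun s => Derive (fun z => G z s) u)) by (intros; now rewrite HDer).
  apply is_derive_RInt_param.
  - apply filter_forall. intros x s _. exists (DG x s). apply is_derive_Reals, HD.
  - intros s _. eapply continuity_2d_pt_ext; [|apply (HDG u s)].
    intros; simpl; now rewrite HDer.
  - apply filter_forall. intros x. now apply ex_RInt_continuity_2d_pt.
Qed.

Lemma RInt_periodic_derivative P dP l :
  (forall s, derivable_pt_lim P s (dP s)) -> (forall s, continuity_pt dP s) ->
  P l = P 0 -> RInt dP 0 l = 0.
Proof.
  intros HD Hc Hper.
  assert (HR := @is_RInt_derive R_CompleteNormedModule P dP 0 l
                  (fun s _ => proj2 (is_derive_Reals _ _ _) (HD s))
                  (fun s _ => proj1 (continuity_pt_filterlim _ _) (Hc s))).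
  rewrite (is_RInt_unique _ _ _ _ HR). simpl. rewrite Hper.
  unfold minus, plus, opp. simpl. ring.
Qed.

Lemma derivative_zero_eq H a b t1 t2 :
  (forall c, a <= c < b -> derivable_pt_lim H c 0) -> a <= t1 < b -> a <= t2 < b ->
  H t1 = H t2.
Proof.
  intros HD Ht1 Ht2. destruct (Rtotal_order t1 t2) as [Hl|[<-|Hg]]; [|reflexivity|].
  - destruct (MVT_cor2 H (fun _ => 0) t1 t2 Hl (fun c Hc => HD c ltac:(lra))) as [c [E _]]. lra.
  - destruct (MVT_cor2 H (fun _ => 0) t2 t1 Hg (fun c Hc => HD c ltac:(lra))) as [c [E _]]. lra.
Qed.

Lemma RInt_tangential_time_derivative_closed_curve (Om : R -> R -> Prop)
    v1 v2 u1 u2 p a b l t :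
  smooth3 v1 -> smooth3 v2 -> smooth3 u1 -> smooth3 u2 -> smooth3 p ->
  smooth1 a -> smooth1 b -> a l = a 0 -> b l = b 0 ->
  (forall r, closure2 Om (a r) (b r)) ->
  (forall r, u1 t (a r) (b r) = 0) -> (forall r, u2 t (a r) (b r) = 0) ->
  (forall x y, Om x y ->
     pd 0 v1 t x y + u1 t x y * pd 1 v1 t x y + u2 t x y * pd 2 v1 t x y
       + (v1 t x y * pd 1 u1 t x y + v2 t x y * pd 1 u2 t x y) = - pd 1 p t x y) ->
  (forall x y, Om x y ->
     pd 0 v2 t x y + u1 t x y * pd 1 v2 t x y + u2 t x y * pd 2 v2 t x y
       + (v1 t x y * pd 2 u1 t x y + v2 t x y * pd 2 u2 t x y) = - pd 2 p t x y) ->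
  RInt (tangential_density (pd 0 v1) (pd 0 v2) a b t) 0 l = 0.
Proof.
  intros Hv1 Hv2 Hu1 Hu2 Hp Ha Hb Hla Hlb Hcl Z1 Z2 E1 E2.
  apply (RInt_periodic_derivative (fun s => - p t (a s) (b s))).
  - intros s. rewrite (tangential_time_derivative_on_curve v1 v2 u1 u2 p); auto;
      [|apply (momentum_residual_closure Om); auto ..].
    exact (derivable_pt_lim_opp _ _ _ (derivable_pt_lim_along_curve p _ _ t s Hp Ha Hb)).
  - intros s. apply continuity_2d_pt_continuity_pt_snd, continuity_2d_pt_tangential_density;
      auto; now apply smooth3_pd.
  - now rewrite Hla, Hlb.
Qed.

Theorem lemma2p3 (alpha T : R) (Om : R -> R -> Prop) (N : nat)
    (c1 c2 : nat -> R -> R) (L epsn : nat -> R) (u1 u2 p : field) :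
  alpha > 0 -> T > 0 ->
  smooth_domain Om N c1 c2 L epsn ->
  smooth3 u1 -> smooth3 u2 -> smooth3 p ->
  alpha_euler_dirichlet alpha T Om N c1 c2 u1 u2 p ->
  forall i, (1 <= i <= N)%nat ->
  forall t1 t2, 0 <= t1 < T -> 0 <= t2 < T ->
    circulation (fun t x y => u1 t x y - alpha * lap u1 t x y)
                (fun t x y => u2 t x y - alpha * lap u2 t x y) c1 c2 L epsn i t1
  = circulation (fun t x y => u1 t x y - alpha * lap u1 t x y)
                (fun t x y => u2 t x y - alpha * lap u2 t x y) c1 c2 L epsn i t2.
Proof.
  intros _ _ Hdom Hu1 Hu2 Hp [Hmom Hdir] i Hi t1 t2 Ht1 Ht2.
  destruct Hdom as [_ [_ [_ [Hcurves [Hbdry _]]]]].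
  assert (HiN : (i <= N)%nat) by apply Hi.
  destruct (Hcurves i HiN) as [_ [Ha [Hb [Hper _]]]].
  destruct (Hper 0) as [Hla Hlb]. rewrite Rplus_0_l in Hla, Hlb.
  set (v1 := fun t x y => u1 t x y - alpha * lap u1 t x y) in *.
  set (v2 := fun t x y => u2 t x y - alpha * lap u2 t x y) in *.
  assert (Hv1 : smooth3 v1) by now apply smooth3_helmholtz.
  assert (Hv2 : smooth3 v2) by now apply smooth3_helmholtz.
  unfold circulation.
  change (epsn i * Rint (tangential_density v1 v2 (c1 i) (c2 i) t1) 0 (L i)
        = epsn i * Rint (tangential_density v1 v2 (c1 i) (c2 i) t2) 0 (L i)).
  rewrite !Rint_RInt
    by (apply ex_RInt_continuity_2d_pt; intro; now apply continuity_2d_pt_tangential_density).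
  f_equal.
  apply (derivative_zero_eq (fun t => RInt (tangential_density v1 v2 (c1 i) (c2 i) t) 0 (L i))
           0 T); [intros t Ht|assumption..].
  (* Only the derivative [0] is rewritten: the lower bound [0] sits under a binder. *)
  rewrite <- (RInt_tangential_time_derivative_closed_curve Om v1 v2 u1 u2 p (c1 i) (c2 i) (L i) t)
    at 1; auto.
  - apply derivable_pt_lim_RInt_param; intros;
      auto using derivable_pt_lim_tangential_density_t, continuity_2d_pt_tangential_density,
        smooth3_pd.
  - intros r. apply Hbdry. now exists i, r.
  - intros r. apply (Hdir t i r Ht HiN).
  - intros r. apply (Hdir t i r Ht HiN).
  - intros x y Hxy. apply (Hmom t x y Ht Hxy).
  - intros x y Hxy. apply (Hmom t x y Ht Hxy).
Qed.
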